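(* Let $\sigma,\eta>0$ and $\mathscr{C}$ be a family of balls as in the context. Let $B\in\mathscr{C}$ and $n\in\{0,1,2,\dots\}$. Suppose $B_1=B(x_1,r_1)\in P^{(n)}$ and $B_2=B(x_2,r_2)$ is a ball of the $(n+4)$-th layer of $B$, i.e. $B_2\in\mathscr{C}$ with $B_2\subset B^{(n+4)}$ and $B_2\not\subset B^{(n+3)}$. Then \[ \operatorname{dist}(B_1,B_2)\geq\max\{\kappa(r_1+r_2),1\},\qquad \kappa:=\sqrt{1+2/\eta^2}-1. \]
   Context: Cover: for constants $\sigma,\eta>0$, $\mathscr{C}$ is a family of closed balls in $\mathbb{R}^3$ with $\bigcup_{B\in\mathscr{C}}B=\mathbb{R}^3$ and $|B|\geq 4\pi/3$ (i.e. radius $\ge1$) for all $B\in\mathscr{C}$, such that (i) each ball in $\mathscr{C}$ intersects at most $\sigma$ balls in $\mathscr{C}$, and (ii) if $B,B'\in\mathscr{C}$ intersect then $\eta^{-1}\le |B|^{1/3}/|B'|^{1/3}\le\eta$. Layers: for $B\in\mathscr{C}$ set $B^{(0)}:=B$, $P^{(0)}:=\{B\}$, and for $n\ge1$, $P^{(n)}:=\{B'\in\mathscr{C}: B'\cap B^{(n-1)}\neq\emptyset\}$, $B^{(n)}:=\bigcup_{B'\in P^{(n)}}B'$. *)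

From Stdlib Require Import Reals List.
Open Scope R_scope.

Definition point := (R * R * R)%type.

Definition edist (x y : point) : R :=
  let '(x1, x2, x3) := x in let '(y1, y2, y3) := y in
  sqrt ((x1 - y1)^2 + (x2 - y2)^2 + (x3 - y3)^2).

Definition ball := (point * R)%type.

Definition in_ball (B : ball) (x : point) : Prop := edist (fst B) x <= snd B.

Definition balls_meet (B B' : ball) : Prop := exists x, in_ball B x /\ in_ball B' x.

Definition is_cover (sigma eta : R) (C : ball -> Prop) : Prop :=
  (forall x : point, exists B, C B /\ in_ball B x) /\
  (* |B| >= 4 pi / 3, i.e. radius >= 1 *)
  (forall B, C B -> 1 <= snd B) /\
  (* (i) each ball of C meets at most sigma balls of C *)
  (forall B, C B -> forall l : list ball, NoDup l ->
     (forall B', In B' l -> C B' /\ balls_meet B' B) -> INR (length l) <= sigma) /\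
  (* (ii) comparable sizes: |B|^{1/3} / |B'|^{1/3} = r / r' *)
  (forall B B', C B -> C B' -> balls_meet B B' ->
     / eta <= snd B / snd B' <= eta).

(* B^{(n)} as a set of points. *)
Fixpoint layer_set (C : ball -> Prop) (B : ball) (n : nat) : point -> Prop :=
  match n with
  | O => in_ball B
  | S m => fun x => exists B', C B' /\
             (exists y, in_ball B' y /\ layer_set C B m y) /\ in_ball B' x
  end.

(* P^{(n)} as a set of balls. *)
Definition layer_balls (C : ball -> Prop) (B : ball) (n : nat) : ball -> Prop :=
  match n with
  | O => fun B' => B' = B
  | S m => fun B' => C B' /\ exists y, in_ball B' y /\ layer_set C B m y
  end.

From Stdlib Require Import Reals List Lra Psatz Classical.
Open Scope R_scope.
Import ListNotations.

(* B1 and B2 cannot be linked by a chain B1 - E - F - B2 of meeting balls of C, for then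
   B2 would lie in B^(n+3); in particular they are disjoint.  Follow the segment from x1 to
   x2, assuming r1 <= r2.  By (i) the balls of C are locally finite, so the set of points
   covered by balls meeting B2 is closed along the segment.  At a boundary point of it, a
   ball Q = B(c, rho) of C covers a segment point at distances p from x1 and q from x2,
   meets a ball F meeting B2, and meets neither B1 nor B2.  Stewart's theorem for c gives
   q (r1^2 + 2 r1 rho) + p (r2^2 + 2 r2 rho) < p q (p + q).  As r2 <= eta^2 rho by (ii)
   along Q - F - B2, Cauchy-Schwarz yields p + q >= sqrt (1 + 2 / eta^2) (r1 + r2), and
   rho >= 1 yields p + q >= r1 + r2 + 1. *)

Definition sqdist (x y : point) : R :=
  let '(x1, x2, x3) := x in let '(y1, y2, y3) := y in
  (x1 - y1)^2 + (x2 - y2)^2 + (x3 - y3)^2.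

Lemma edist_sqdist x y : edist x y = sqrt (sqdist x y).
Proof. destruct x as [[x1 x2] x3], y as [[y1 y2] y3]; reflexivity. Qed.

Lemma sum3_sq_ge0 u1 u2 u3 : 0 <= u1^2 + u2^2 + u3^2.
Proof. pose proof (pow2_ge_0 u1); pose proof (pow2_ge_0 u2); pose proof (pow2_ge_0 u3); lra. Qed.

Lemma sqdist_ge0 x y : 0 <= sqdist x y.
Proof. destruct x as [[x1 x2] x3], y as [[y1 y2] y3]; apply sum3_sq_ge0. Qed.

Lemma sqdist_sym x y : sqdist x y = sqdist y x.
Proof. destruct x as [[x1 x2] x3], y as [[y1 y2] y3]; simpl; ring. Qed.

Lemma edist_sym x y : edist x y = edist y x.
Proof. now rewrite !edist_sqdist, sqdist_sym. Qed.

Lemma edist_ge0 x y : 0 <= edist x y.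
Proof. rewrite edist_sqdist; apply sqrt_pos. Qed.

Lemma sqdist_edist x y : sqdist x y = edist x y ^ 2.
Proof. rewrite edist_sqdist, pow2_sqrt; auto using sqdist_ge0. Qed.

Lemma edist_le_iff x y r : 0 <= r -> (edist x y <= r <-> sqdist x y <= r ^ 2).
Proof.
  intros Hr; rewrite sqdist_edist; pose proof (edist_ge0 x y).
  split; intros Hle; nra.
Qed.

Lemma sqrt_le_sum_iff a u v : 0 <= a -> 0 <= u -> 0 <= v ->
  (sqrt a <= u + v <-> a <= (u + v) ^ 2).
Proof.
  intros Ha Hu Hv; pose proof (pow2_sqrt a Ha); pose proof (sqrt_pos a).
  split; intros Hle; nra.
Qed.

Lemma dot3_le_sqrt u1 u2 u3 v1 v2 v3 :
  u1 * v1 + u2 * v2 + u3 * v3 <=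
  sqrt (u1^2 + u2^2 + u3^2) * sqrt (v1^2 + v2^2 + v3^2).
Proof.
  rewrite <- sqrt_mult by apply sum3_sq_ge0.
  destruct (Rle_dec (u1 * v1 + u2 * v2 + u3 * v3) 0) as [Hneg | Hpos].
  - pose proof (sqrt_pos ((u1^2 + u2^2 + u3^2) * (v1^2 + v2^2 + v3^2))); lra.
  - rewrite <- (sqrt_pow2 (u1 * v1 + u2 * v2 + u3 * v3)) by lra.
    apply sqrt_le_1_alt.
    (* Lagrange's identity *)
    assert (Hlag : (u1^2 + u2^2 + u3^2) * (v1^2 + v2^2 + v3^2) =
      (u1 * v1 + u2 * v2 + u3 * v3)^2 +
      ((u1 * v2 - u2 * v1)^2 + (u1 * v3 - u3 * v1)^2 + (u2 * v3 - u3 * v2)^2)) by ring.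
    pose proof (sum3_sq_ge0 (u1 * v2 - u2 * v1) (u1 * v3 - u3 * v1) (u2 * v3 - u3 * v2)).
    rewrite Hlag; lra.
Qed.

Lemma edist_triangle x y z : edist x z <= edist x y + edist y z.
Proof.
  destruct x as [[x1 x2] x3], y as [[y1 y2] y3], z as [[z1 z2] z3]; unfold edist.
  pose proof (dot3_le_sqrt (x1 - y1) (x2 - y2) (x3 - y3) (y1 - z1) (y2 - z2) (y3 - z3)).
  set (U := (x1 - y1)^2 + (x2 - y2)^2 + (x3 - y3)^2) in *.
  set (V := (y1 - z1)^2 + (y2 - z2)^2 + (y3 - z3)^2) in *.
  assert (HU : 0 <= U) by apply sum3_sq_ge0.
  assert (HV : 0 <= V) by apply sum3_sq_ge0.
  apply sqrt_le_sum_iff; auto using sum3_sq_ge0, sqrt_pos.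
  pose proof (pow2_sqrt U HU); pose proof (pow2_sqrt V HV).
  unfold U, V in *; nra.
Qed.

Definition lerp (a b : point) (t : R) : point :=
  let '(a1, a2, a3) := a in let '(b1, b2, b3) := b in
  (a1 + t * (b1 - a1), a2 + t * (b2 - a2), a3 + t * (b3 - a3)).

Lemma sqdist_lerp a b t t' :
  sqdist (lerp a b t) (lerp a b t') = (t - t')^2 * sqdist a b.
Proof. destruct a as [[a1 a2] a3], b as [[b1 b2] b3]; simpl; ring. Qed.

Lemma sqdist_lerp_l a b t : sqdist a (lerp a b t) = t^2 * sqdist a b.
Proof. destruct a as [[a1 a2] a3], b as [[b1 b2] b3]; simpl; ring. Qed.

Lemma sqdist_lerp_r a b t : sqdist b (lerp a b t) = (1 - t)^2 * sqdist a b.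
Proof. destruct a as [[a1 a2] a3], b as [[b1 b2] b3]; simpl; ring. Qed.

Lemma sqdist_lerp_stewart a b c t :
  sqdist c (lerp a b t) = (1 - t) * sqdist c a + t * sqdist c b - t * (1 - t) * sqdist a b.
Proof.
  destruct a as [[a1 a2] a3], b as [[b1 b2] b3], c as [[c1 c2] c3]; simpl; ring.
Qed.

Definition segment_point (a b : point) (s : R) : point := lerp a b (s / edist a b).

Section SegmentPoint.
Variables a b : point.
Hypothesis Hab : 0 < edist a b.

Lemma edist_segment_point s s' :
  edist (segment_point a b s) (segment_point a b s') = Rabs (s - s').
Proof.
  unfold segment_point; rewrite edist_sqdist, sqdist_lerp, sqdist_edist.
  replace ((s / edist a b - s' / edist a b) ^ 2 * edist a b ^ 2) with ((s - s') ^ 2)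
    by (field; lra).
  now rewrite <- Rsqr_pow2, sqrt_Rsqr_abs.
Qed.

Lemma edist_segment_point_l s : 0 <= s -> edist a (segment_point a b s) = s.
Proof.
  intros Hs; unfold segment_point; rewrite edist_sqdist, sqdist_lerp_l, sqdist_edist.
  replace ((s / edist a b) ^ 2 * edist a b ^ 2) with (s ^ 2) by (field; lra).
  now apply sqrt_pow2.
Qed.

Lemma edist_segment_point_r s : s <= edist a b ->
  edist b (segment_point a b s) = edist a b - s.
Proof.
  intros Hs; unfold segment_point; rewrite edist_sqdist, sqdist_lerp_r, sqdist_edist.
  replace ((1 - s / edist a b) ^ 2 * edist a b ^ 2) with ((edist a b - s) ^ 2)
    by (field; lra).
  apply sqrt_pow2; lra.
Qed.

Lemma sqdist_segment_point_stewart c s :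
  edist a b * sqdist c (segment_point a b s) =
  (edist a b - s) * sqdist c a + s * sqdist c b - s * (edist a b - s) * edist a b.
Proof.
  unfold segment_point; rewrite sqdist_lerp_stewart, (sqdist_edist a b); field; lra.
Qed.

End SegmentPoint.

Lemma balls_meet_sym D D' : balls_meet D D' -> balls_meet D' D.
Proof. intros [x [Hx Hx']]; now exists x. Qed.

Lemma balls_meet_refl c r : 0 <= r -> balls_meet (c, r) (c, r).
Proof.
  intros Hr; exists c; unfold in_ball; simpl.
  rewrite edist_sqdist; replace (sqdist c c) with 0
    by (destruct c as [[c1 c2] c3]; simpl; ring).
  rewrite sqrt_0; lra.
Qed.

Lemma balls_meet_of_sqdist c r c' r' : 0 <= r -> 0 <= r' -> 0 < r + r' ->
  sqdist c c' <= (r + r') ^ 2 -> balls_meet (c, r) (c', r').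
Proof.
  intros Hr Hr' Hrr' Hcc'.
  set (t := r / (r + r')).
  assert (Ht : t * (r + r') = r) by (unfold t; field; lra).
  assert (Ht' : (1 - t) * (r + r') = r') by (unfold t; field; lra).
  assert (Ht0 : 0 <= t) by (unfold t; apply Rle_mult_inv_pos; lra).
  assert (Ht1 : 0 <= 1 - t) by nra.
  pose proof (sqdist_ge0 c c').
  exists (lerp c c' t); unfold in_ball; cbn [fst snd]; split; apply edist_le_iff; auto.
  - rewrite sqdist_lerp_l; replace (r ^ 2) with (t ^ 2 * (r + r') ^ 2)
      by (rewrite <- Rpow_mult_distr, Ht; reflexivity).
    apply Rmult_le_compat_l; [apply pow2_ge_0 | lra].
  - rewrite sqdist_lerp_r; replace (r' ^ 2) with ((1 - t) ^ 2 * (r + r') ^ 2)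
      by (rewrite <- Rpow_mult_distr, Ht'; reflexivity).
    apply Rmult_le_compat_l; [apply pow2_ge_0 | lra].
Qed.

Lemma sqdist_gt_of_not_meet c r c' r' : 0 <= r -> 0 <= r' -> 0 < r + r' ->
  ~ balls_meet (c, r) (c', r') -> (r + r') ^ 2 < sqdist c c'.
Proof.
  intros Hr Hr' Hrr' Hno; apply Rnot_le_lt; intros Hle.
  now apply Hno, balls_meet_of_sqdist.
Qed.

Lemma edist_gt_of_not_meet c r c' r' : 0 <= r -> 0 <= r' -> 0 < r + r' ->
  ~ balls_meet (c, r) (c', r') -> r + r' < edist c c'.
Proof.
  intros Hr Hr' Hrr' Hno.
  pose proof (sqdist_gt_of_not_meet c r c' r' Hr Hr' Hrr' Hno).
  rewrite sqdist_edist in *; pose proof (edist_ge0 c c'); nra.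
Qed.

Lemma layer_set_of_layer_balls C B n D x :
  layer_balls C B n D -> in_ball D x -> layer_set C B n x.
Proof.
  destruct n as [|m]; simpl.
  - now intros ->.
  - intros [HD Hy] Hx; now exists D.
Qed.

Lemma layer_balls_in_cover C B n D : C B -> layer_balls C B n D -> C D.
Proof. destruct n; simpl; [now intros ? -> | now intros _ []]. Qed.

Definition chain3 (C : ball -> Prop) (D D' : ball) : Prop :=
  exists E F, C E /\ C F /\ balls_meet D E /\ balls_meet E F /\ balls_meet F D'.

Lemma chain3_sym C D D' : chain3 C D D' -> chain3 C D' D.
Proof.
  intros (E & F & HE & HF & HDE & HEF & HFD').
  exists F, E; repeat split; auto using balls_meet_sym.
Qed.

Lemma chain3_of_meet C c r c' r' : C (c, r) -> C (c', r') -> 0 <= r -> 0 <= r' ->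
  balls_meet (c, r) (c', r') -> chain3 C (c, r) (c', r').
Proof.
  intros HD HD' Hr Hr' Hm; exists (c, r), (c', r'); repeat split; auto using balls_meet_refl.
Qed.

Lemma layer_set_of_chain3 C B n D D' : layer_balls C B n D -> C D' ->
  chain3 C D D' -> forall x, in_ball D' x -> layer_set C B (n + 3) x.
Proof.
  intros HD HD' (E & F & HE & HF & [p [HpD HpE]] & [q [HqE HqF]] & [u [HuF HuD']]) x Hx.
  rewrite Nat.add_comm; simpl.
  exists D'; split; [auto | split; [exists u; split; auto | auto]].
  exists F; split; [auto | split; [exists q; split; auto | auto]].
  exists E; split; [auto | split; [exists p; split; auto | auto]].
  eapply layer_set_of_layer_balls; eauto.
Qed.

Definition octant := (bool * bool * bool)%type.

Definition in_octant (o : octant) (w c : point) : Prop :=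
  let '(b1, b2, b3) := o in let '(w1, w2, w3) := w in let '(c1, c2, c3) := c in
  (if b1 then w1 <= c1 else c1 <= w1) /\
  (if b2 then w2 <= c2 else c2 <= w2) /\
  (if b3 then w3 <= c3 else c3 <= w3).

Definition octant_of (w c : point) : octant :=
  let '(w1, w2, w3) := w in let '(c1, c2, c3) := c in
  (if Rle_dec w1 c1 then true else false,
   if Rle_dec w2 c2 then true else false,
   if Rle_dec w3 c3 then true else false).

Lemma in_octant_of w c : in_octant (octant_of w c) w c.
Proof.
  destruct w as [[w1 w2] w3], c as [[c1 c2] c3]; simpl.
  destruct (Rle_dec w1 c1), (Rle_dec w2 c2), (Rle_dec w3 c3); repeat split; lra.
Qed.

Definition all_octants : list octant :=
  [(true, true, true); (true, true, false); (true, false, true); (true, false, false);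
   (false, true, true); (false, true, false); (false, false, true); (false, false, false)].

Lemma in_all_octants o : In o all_octants.
Proof. destruct o as [[[|] [|]] [|]]; simpl; tauto. Qed.

(* Seen from [w], two points of the same octant make a non-obtuse angle. *)
Lemma sqdist_le_of_in_octant o w c c' : in_octant o w c -> in_octant o w c' ->
  sqdist c c' <= sqdist c w + sqdist c' w.
Proof.
  destruct o as [[b1 b2] b3], w as [[w1 w2] w3], c as [[c1 c2] c3], c' as [[d1 d2] d3].
  simpl; intros (H1 & H2 & H3) (K1 & K2 & K3).
  assert (0 <= (c1 - w1) * (d1 - w1)) by (destruct b1; nra).
  assert (0 <= (c2 - w2) * (d2 - w2)) by (destruct b2; nra).
  assert (0 <= (c3 - w3) * (d3 - w3)) by (destruct b3; nra).
  nra.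
Qed.

Lemma common_radius {A : Type} (P : A -> R -> Prop) (l : list A) :
  (forall a d d', d' <= d -> P a d -> P a d') ->
  (forall a, In a l -> exists d, 0 < d /\ P a d) ->
  exists d, 0 < d /\ forall a, In a l -> P a d.
Proof.
  intros Hmono; induction l as [|a l IH]; intros Hl.
  - exists 1; split; [lra | intros _ []].
  - destruct (Hl a (or_introl eq_refl)) as [d1 [Hd1 H1]].
    destruct IH as [d2 [Hd2 H2]]; [intros; apply Hl; now right |].
    exists (Rmin d1 d2); split; [now apply Rmin_glb_lt |].
    intros a' [<- | Ha'].
    + apply Hmono with d1; [apply Rmin_l | auto].
    + apply Hmono with d2; [apply Rmin_r | auto].
Qed.

Lemma interval_boundary_point (A : R -> Prop) a b : a <= b -> ~ A a -> A b ->
  exists s0, forall d, 0 < d ->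
    (exists s, a <= s <= b /\ Rabs (s - s0) < d /\ ~ A s) /\
    (exists t, a <= t <= b /\ Rabs (t - s0) < d /\ A t).
Proof.
  intros Hab Ha Hb.
  set (M := fun s => a <= s <= b /\ ~ A s).
  destruct (completeness M) as [s0 [Hub Hlub]].
  { exists b; intros s [Hs _]; lra. }
  { exists a; split; [lra | auto]. }
  assert (Has0 : a <= s0) by (apply Hub; split; [lra | auto]).
  assert (Hs0b : s0 <= b) by (apply Hlub; intros s [Hs _]; lra).
  exists s0; intros d Hd; split.
  - apply NNPP; intros Hno.
    enough (s0 <= s0 - d) by lra.
    apply Hlub; intros s [Hs HAs]; apply Rnot_lt_le; intros Hlt.
    pose proof (Hub s (conj Hs HAs)).
    apply Hno; exists s; split; [auto | split; [apply Rabs_def1; lra | auto]].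
  - destruct (Rle_dec b (s0 + d / 2)) as [Hle | Hgt].
    + exists b; split; [lra | split; [apply Rabs_def1; lra | auto]].
    + exists (s0 + d / 2); split; [lra | split; [apply Rabs_def1; lra |]].
      apply NNPP; intros HA.
      enough (s0 + d / 2 <= s0) by lra.
      apply Hub; split; [lra | auto].
Qed.

Lemma stewart_gap_bound a r a' r' c rho s :
  0 < r -> 0 < r' -> 0 < rho -> r <= s <= edist a a' - r' ->
  in_ball (c, rho) (segment_point a a' s) ->
  ~ balls_meet (c, rho) (a, r) -> ~ balls_meet (c, rho) (a', r') ->
  (edist a a' - s) * (r ^ 2 + 2 * r * rho) + s * (r' ^ 2 + 2 * r' * rho) <
  s * (edist a a' - s) * edist a a'.
Proof.
  intros Hr Hr' Hrho Hs Hin Hmeet Hmeet'.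
  set (L := edist a a') in *.
  assert (HL : 0 < L) by lra.
  apply sqdist_gt_of_not_meet in Hmeet, Hmeet'; try lra.
  unfold in_ball in Hin; cbn [fst snd] in Hin; apply edist_le_iff in Hin; [| lra].
  pose proof (sqdist_segment_point_stewart a a' HL c s) as Hst; fold L in Hst.
  assert (Hq : 0 < L - s) by lra.
  assert (L * sqdist c (segment_point a a' s) <= L * rho ^ 2)
    by (apply Rmult_le_compat_l; lra).
  assert ((L - s) * (rho + r) ^ 2 < (L - s) * sqdist c a)
    by (apply Rmult_lt_compat_l; lra).
  assert (s * (rho + r') ^ 2 < s * sqdist c a')
    by (apply Rmult_lt_compat_l; lra).
  nra.
Qed.

Lemma separation_kappa_bound p q r r' rho eta : 0 < eta -> 0 < p -> 0 < q ->
  0 <= r -> 0 <= r' -> r <= eta ^ 2 * rho -> r' <= eta ^ 2 * rho ->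
  q * (r ^ 2 + 2 * r * rho) + p * (r' ^ 2 + 2 * r' * rho) < p * q * (p + q) ->
  sqrt (1 + 2 / eta ^ 2) * (r + r') < p + q.
Proof.
  intros Heta Hp Hq Hr Hr' Hrrho Hr'rho Hgap.
  set (k := 2 / eta ^ 2).
  assert (Hk0 : 0 <= k)
    by (unfold k; apply Rlt_le, Rdiv_lt_0_compat; [lra | apply pow_lt; lra]).
  assert (Hk : k * eta ^ 2 = 2) by (unfold k; field; lra).
  assert (Hkx : forall x, 0 <= x -> x <= eta ^ 2 * rho -> k * x ^ 2 <= 2 * x * rho).
  { intros x Hx Hxrho.
    assert (k * x <= k * (eta ^ 2 * rho)) by (apply Rmult_le_compat_l; auto).
    replace (k * (eta ^ 2 * rho)) with (2 * rho) in * by (rewrite <- Hk; ring).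
    nra. }
  pose proof (Hkx r Hr Hrrho); pose proof (Hkx r' Hr' Hr'rho).
  assert (Hcs : p * q * (r + r') ^ 2 <= (q * r ^ 2 + p * r' ^ 2) * (p + q)).
  { assert (Hid : (q * r ^ 2 + p * r' ^ 2) * (p + q) - p * q * (r + r') ^ 2 =
      (q * r - p * r') ^ 2) by ring.
    pose proof (pow2_ge_0 (q * r - p * r')); lra. }
  assert (Hsq : (1 + k) * (r + r') ^ 2 < (p + q) ^ 2).
  { assert (Hpq : 0 < p * q) by nra.
    apply (Rmult_lt_reg_l (p * q)); [auto |].
    assert ((1 + k) * (q * r ^ 2 + p * r' ^ 2) < p * q * (p + q)) by nra.
    nra. }
  pose proof (pow2_sqrt (1 + k) ltac:(lra)); pose proof (sqrt_pos (1 + k)).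
  nra.
Qed.

Lemma separation_unit_bound p q r r' rho : 1 <= r <= p -> 1 <= r' <= q -> 1 <= rho ->
  q * (r ^ 2 + 2 * r * rho) + p * (r' ^ 2 + 2 * r' * rho) < p * q * (p + q) ->
  1 <= p + q - r - r'.
Proof.
  intros Hr Hr' Hrho Hgap; apply Rnot_lt_le; intros Hlt.
  (* With a = y - x: x^2 + 2x - y^2 = 2y(1 - a) - a(2 - a) and a(2 - a) <= y a(2 - a). *)
  assert (Hterm : forall x y, 1 <= x <= y -> y - x <= 1 ->
            x ^ 2 + 2 * x * rho - y ^ 2 >= y * (2 - 4 * (y - x) + (y - x) ^ 2)).
  { intros x y Hxy Hyx.
    assert (0 <= (y - 1) * (y - x) * (2 - (y - x)))
      by (apply Rmult_le_pos; [apply Rmult_le_pos |]; lra).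
    assert (0 <= x * (rho - 1)) by nra.
    nra. }
  pose proof (Hterm r p Hr ltac:(lra)); pose proof (Hterm r' q Hr' ltac:(lra)).
  assert (Hpq : 0 < p * q) by nra.
  assert (0 < 4 - 4 * ((p - r) + (q - r')) + (p - r) ^ 2 + (q - r') ^ 2)
    by (pose proof (pow2_ge_0 (p - r)); pose proof (pow2_ge_0 (q - r')); lra).
  nra.
Qed.

Section Cover.
Variables (sigma eta : R) (C : ball -> Prop).
Hypothesis Hcov : is_cover sigma eta C.

Lemma cover_radius_ge1 D : C D -> 1 <= snd D.
Proof. destruct Hcov as (_ & Hr & _); apply Hr. Qed.

Definition excess (w : point) (D : ball) : R := edist (fst D) w - snd D.

Definition shell_ball (o : octant) (w : point) (D : ball) : Prop :=
  C D /\ in_octant o w (fst D) /\ 0 < excess w D <= / 4.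

Lemma shell_balls_meet o w D D' :
  shell_ball o w D -> shell_ball o w D' -> balls_meet D D'.
Proof.
  intros [HD [Ho [Hpos Hle]]] [HD' [Ho' [Hpos' Hle']]].
  pose proof (cover_radius_ge1 D HD); pose proof (cover_radius_ge1 D' HD').
  destruct D as [c r], D' as [c' r']; unfold excess in *; simpl in *.
  apply balls_meet_of_sqdist; try lra.
  pose proof (sqdist_le_of_in_octant o w c c' Ho Ho').
  rewrite !sqdist_edist in *.
  pose proof (edist_ge0 c w); pose proof (edist_ge0 c' w).
  assert (edist c w ^ 2 <= (r + / 4) ^ 2) by nra.
  assert (edist c' w ^ 2 <= (r' + / 4) ^ 2) by nra.
  nra.
Qed.

Lemma shell_balls_length o w D l : NoDup (D :: l) ->
  (forall D', In D' (D :: l) -> shell_ball o w D') -> INR (S (length l)) <= sigma.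
Proof.
  intros Hnd Hl; destruct Hcov as (_ & _ & Hsig & _).
  destruct (Hl D (or_introl eq_refl)) as [HD _].
  apply (Hsig D HD (D :: l) Hnd); intros D' HD'.
  split; [apply (Hl D' HD') |].
  apply shell_balls_meet with o w; apply Hl; [auto | now left].
Qed.

(* Balls of [C] whose boundary passes ever closer to [w] from one octant would be
   infinitely many pairwise meeting balls, contradicting (i). *)
Lemma cover_ball_contains_nearby_in_octant o w : exists d, 0 < d /\
  forall D x, C D -> in_octant o w (fst D) -> in_ball D x -> edist x w < d -> in_ball D w.
Proof.
  apply NNPP; intros Hno.
  assert (Hsmall : forall e, 0 < e -> exists D, shell_ball o w D /\ excess w D < e).
  { intros e He; apply NNPP; intros Hn; apply Hno.
    exists (Rmin e (/ 4)); split; [apply Rmin_glb_lt; lra |].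
    intros D x HD Ho Hx Hxw; apply NNPP; intros Hw; apply Hn; exists D.
    pose proof (edist_triangle (fst D) x w).
    pose proof (Rmin_l e (/ 4)); pose proof (Rmin_r e (/ 4)).
    unfold in_ball in Hx, Hw; unfold shell_ball, excess.
    split; [split; [auto | split; [auto | split]] |]; lra. }
  assert (Hlong : forall k e, 0 < e -> exists l, length l = k /\ NoDup l /\
            forall D, In D l -> shell_ball o w D /\ excess w D < e).
  { induction k as [|k IH]; intros e He.
    - exists nil; split; [reflexivity | split; [constructor | intros _ []]].
    - destruct (Hsmall e He) as [D [HD HDe]].
      destruct (IH (excess w D)) as [l [Hlen [Hnd Hl]]]; [apply HD |].
      exists (D :: l); split; [simpl; congruence | split].
      + constructor; [| auto]; intros HDl.
        destruct (Hl D HDl) as [_ Hlt]; lra.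
      + intros D' [<- | HD']; [auto |].
        destruct (Hl D' HD') as [HD'sh HD'e]; split; [auto | lra]. }
  destruct (INR_archimed 1 sigma) as [N HN]; [lra |].
  destruct (Hlong (S N) 1) as [[| D l] [Hlen [Hnd Hl]]]; [lra | discriminate |].
  pose proof (shell_balls_length o w D l Hnd (fun D' H => proj1 (Hl D' H))) as Hlen'.
  simpl in Hlen; rewrite Hlen, S_INR in Hlen'; lra.
Qed.

Lemma cover_ball_contains_nearby w : exists d, 0 < d /\
  forall D x, C D -> in_ball D x -> edist x w < d -> in_ball D w.
Proof.
  destruct (common_radius (fun o d => forall D x, C D -> in_octant o w (fst D) ->
              in_ball D x -> edist x w < d -> in_ball D w) all_octants) as [d [Hd Hall]].
  - intros o d d' Hle Hd D x HD Ho Hx Hxw; apply Hd with x; auto; lra.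
  - intros o _; apply cover_ball_contains_nearby_in_octant.
  - exists d; split; [auto |]; intros D x HD Hx Hxw.
    apply (Hall (octant_of w (fst D))) with x; auto using in_all_octants, in_octant_of.
Qed.

(* The points covered by balls meeting [(a', r')] form [layer_set C (a', r') 1]; the ball
   is found at a boundary point of this set on the segment. *)
Lemma bridging_ball a r a' r' : C (a, r) -> C (a', r') -> r + r' < edist a a' ->
  ~ chain3 C (a, r) (a', r') ->
  exists c rho s, C (c, rho) /\ r <= s <= edist a a' - r' /\
    in_ball (c, rho) (segment_point a a' s) /\
    ~ balls_meet (c, rho) (a, r) /\ ~ balls_meet (c, rho) (a', r') /\
    exists F, C F /\ balls_meet (c, rho) F /\ balls_meet F (a', r').
Proof.
  intros HB HB' Hfar Hno.
  pose proof (cover_radius_ge1 _ HB) as Hr; pose proof (cover_radius_ge1 _ HB') as Hr'.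
  simpl in Hr, Hr'.
  assert (HL : 0 < edist a a') by lra.
  set (P := segment_point a a').
  set (A := fun s => layer_set C (a', r') 1 (P s)).
  assert (HAr : ~ A r).
  { intros [F [HF [HFB' HFr]]]; apply Hno; exists (a, r), F.
    split; [auto | split; [auto | split; [apply balls_meet_refl; lra | split; [| exact HFB']]]].
    exists (P r); split; [| auto].
    unfold in_ball, P; simpl; rewrite edist_segment_point_l; lra. }
  assert (HAend : A (edist a a' - r')).
  { exists (a', r'); split; [auto | split; [exact (balls_meet_refl a' r' ltac:(lra)) |]].
    unfold in_ball, P; simpl; rewrite edist_segment_point_r; lra. }
  destruct (interval_boundary_point A r (edist a a' - r')) as [s0 Hs0]; [lra | auto | auto |].
  destruct (cover_ball_contains_nearby (P s0)) as [d [Hd Hnear]].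
  destruct (Hs0 d Hd) as [[s [Hs [Hss0 HAs]]] [t [Ht [Hts0 [F [HF [HFB' HFt]]]]]]].
  assert (HFs0 : in_ball F (P s0)).
  { apply Hnear with (P t); auto; unfold P; rewrite edist_segment_point; auto. }
  destruct Hcov as [Hcv _]; destruct (Hcv (P s)) as [[c rho] [Hc Hcs]].
  assert (Hcs0 : in_ball (c, rho) (P s0)).
  { apply Hnear with (P s); auto; unfold P; rewrite edist_segment_point; auto. }
  assert (HcF : balls_meet (c, rho) F) by (exists (P s0); auto).
  exists c, rho, s; split; [auto | split; [auto | split; [auto | split; [| split]]]].
  - intros Hm; apply Hno; exists (c, rho), F.
    split; [auto | split; [auto | split; [now apply balls_meet_sym | split; [auto | exact HFB']]]].
  - intros Hm; apply HAs; exists (c, rho); split; [auto | split; [exact Hm | auto]].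
  - exists F; split; [auto | split; [auto | exact HFB']].
Qed.

Hypothesis Heta : 0 < eta.

Lemma radius_le_of_meet D E : C D -> C E -> balls_meet D E -> snd E <= eta * snd D.
Proof.
  intros HD HE Hm; destruct Hcov as (_ & _ & _ & Hratio).
  destruct (Hratio D E HD HE Hm) as [Hlo _].
  pose proof (cover_radius_ge1 E HE).
  apply (Rmult_le_compat_l (eta * snd E)) in Hlo; [| nra].
  replace (eta * snd E * / eta) with (snd E) in Hlo by (field; lra).
  replace (eta * snd E * (snd D / snd E)) with (eta * snd D) in Hlo by (field; lra).
  exact Hlo.
Qed.

Lemma separation_of_no_chain a r a' r' : C (a, r) -> C (a', r') -> r <= r' ->
  ~ chain3 C (a, r) (a', r') ->
  Rmax ((sqrt (1 + 2 / eta ^ 2) - 1) * (r + r')) 1 <= edist a a' - r - r'.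
Proof.
  intros HB HB' Hrr' Hno.
  pose proof (cover_radius_ge1 _ HB) as Hr; pose proof (cover_radius_ge1 _ HB') as Hr'.
  simpl in Hr, Hr'.
  assert (Hfar : r + r' < edist a a').
  { apply edist_gt_of_not_meet; try lra.
    intros Hm; apply Hno, chain3_of_meet; auto; lra. }
  destruct (bridging_ball a r a' r' HB HB' Hfar Hno)
    as (c & rho & s & Hc & Hs & Hin & Hmeet & Hmeet' & F & HF & HcF & HFB').
  pose proof (cover_radius_ge1 _ Hc) as Hrho; simpl in Hrho.
  assert (Hr'rho : r' <= eta ^ 2 * rho).
  { pose proof (radius_le_of_meet _ _ Hc HF HcF); pose proof (radius_le_of_meet _ _ HF HB' HFB').
    pose proof (cover_radius_ge1 _ HF); simpl in *; nra. }
  pose proof (stewart_gap_bound a r a' r' c rho s ltac:(lra) ltac:(lra) ltac:(lra) Hs Hin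
                Hmeet Hmeet') as Hgap.
  replace (s * (edist a a' - s) * edist a a')
    with (s * (edist a a' - s) * (s + (edist a a' - s))) in Hgap by ring.
  apply Rmax_lub.
  - pose proof (separation_kappa_bound s (edist a a' - s) r r' rho eta Heta ltac:(lra)
                  ltac:(lra) ltac:(lra) ltac:(lra) ltac:(lra) Hr'rho Hgap); lra.
  - pose proof (separation_unit_bound s (edist a a' - s) r r' rho ltac:(lra) ltac:(lra)
                  ltac:(lra) Hgap); lra.
Qed.

End Cover.

Theorem lemma3p1 (sigma eta : R) (C : ball -> Prop) (B : ball) (n : nat)
  (x1 : point) (r1 : R) (x2 : point) (r2 : R) :
  0 < sigma -> 0 < eta -> is_cover sigma eta C -> C B ->
  layer_balls C B n (x1, r1) ->
  C (x2, r2) ->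
  (forall x, in_ball (x2, r2) x -> layer_set C B (n + 4) x) ->
  ~ (forall x, in_ball (x2, r2) x -> layer_set C B (n + 3) x) ->
  forall y1 y2 : point, in_ball (x1, r1) y1 -> in_ball (x2, r2) y2 ->
    Rmax ((sqrt (1 + 2 / eta ^ 2) - 1) * (r1 + r2)) 1 <= edist y1 y2.
Proof.
  intros _ Heta Hcov HB HB1 HB2 _ Hnot3 y1 y2 Hy1 Hy2.
  pose proof (layer_balls_in_cover C B n _ HB HB1) as HC1.
  assert (Hno : ~ chain3 C (x1, r1) (x2, r2)).
  { intros Hch; apply Hnot3; exact (layer_set_of_chain3 C B n _ _ HB1 HB2 Hch). }
  assert (Hy : edist x1 x2 - r1 - r2 <= edist y1 y2).
  { unfold in_ball in Hy1, Hy2; simpl in Hy1, Hy2.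
    pose proof (edist_triangle x1 y1 x2); pose proof (edist_triangle y1 y2 x2).
    rewrite (edist_sym x2 y2) in Hy2; lra. }
  apply Rle_trans with (2 := Hy).
  destruct (Rle_dec r1 r2) as [Hle | Hgt].
  - exact (separation_of_no_chain sigma eta C Hcov Heta x1 r1 x2 r2 HC1 HB2 Hle Hno).
  - rewrite (Rplus_comm r1 r2), edist_sym.
    replace (edist x2 x1 - r1 - r2) with (edist x2 x1 - r2 - r1) by ring.
    apply (separation_of_no_chain sigma eta C Hcov Heta); auto; [lra |].
    intros Hch; apply Hno, chain3_sym, Hch.
Qed.
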